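(* Let $q$ be a prime power, $m\ge2$, $s,\ell,r_1,\dots,r_m\ge1$ integers, $k=m\ell-s$ with $k\ge\ell$, $n=\sum_{i=1}^m(\ell+r_i)$. Consider the matrix $G(x,y)$ with entries in the polynomial ring $\mathbb{F}_q[x_{w,z},y_{t,i,j}]$ ($1\le w\le k$, $1\le z\le s$, $1\le t\le\ell$, $1\le i\le m$, $1\le j\le r_i$) given by $G(x,y)=(C_1\mid D_1\mid\dots\mid C_m\mid D_m)$, where $(C_1\mid\dots\mid C_m)=[I_k\mid A]$ with $A=(x_{w,z})$ a $k\times s$ matrix of variables, each $C_i$ has $\ell$ columns, and $D_i$ has $r_i$ columns, the $j$-th being $\sum_{t=1}^{\ell}y_{t,i,j}C_i^{(t)}$ with $C_i^{(t)}$ the $t$-th column of $C_i$. Call the $i$-th block of $G(x,y)$ the columns of $(C_i\mid D_i)$. Let $\mathcal T_{k,\ell}(G)$ be the set of $k\times k$ submatrices of $G(x,y)$ having at most $\ell$ columns in each block, and let $p(x,y)=\mathrm{lcm}\{\det S\mid S\in\mathcal T_{k,\ell}(G)\}$. Then the total degree of $p$ satisfies $$\deg p(x,y)\le 2(n-k)\binom{n-1}{k-1}.$$ *)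

From HB Require Import structures.
From mathcomp Require Import all_boot all_algebra.
From mathcomp Require Import mpoly.

Set Implicit Arguments.
Unset Strict Implicit.
Unset Printing Implicit Defensive.

Import GRing.Theory.
Local Open Scope ring_scope.

Section Lemma19Defs.
Variables (F : finFieldType) (k s l m : nat) (r : 'I_m -> nat).

Definition yidx := {p : 'I_l * 'I_m & 'I_(r p.2)}.
Definition varT := (('I_k * 'I_s) + yidx)%type.

Definition nvars := #|{: varT}|.
Definition Pring := {mpoly F[nvars]}.

Definition var (v : varT) : Pring := 'X_(enum_rank v).
Definition xv (w : 'I_k) (z : 'I_s) : Pring := var (inl (w, z)).
Definition yv (t : 'I_l) (i : 'I_m) (j : 'I_(r i)) : Pring :=
  var (inr (existT (fun p : 'I_l * 'I_m => 'I_(r p.2)) (t, i) j)).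

(* entry (w, g) of [I_k | A], columns numbered g = 0 .. k+s-1 *)
Definition Centry (w : 'I_k) (g : nat) : Pring :=
  if (g < k)%N then ((w : nat) == g)%:R
  else match insub (g - k)%N : option 'I_s with
       | Some z => xv w z
       | None => 0
       end.

(* columns of G: block i has l + r_i columns; column a < l of block i is
   C_i^(a) = column i*l + a of [I_k | A]; column l + j is the j-th column
   of D_i, i.e. sum_t y_{t,i,j} C_i^(t). *)
Definition colT := {i : 'I_m & 'I_(l + r i)}.

Definition Gentry (w : 'I_k) (c : colT) : Pring :=
  let i := tag c in
  let a := tagged c in
  if (a < l)%N then Centry w (i * l + a)
  else match insub (a - l)%N : option 'I_(r i) with
       | Some j => \sum_(t < l) yv t j * Centry w (i * l + t)
       | None => 0
       end.

(* determinants of the k x k submatrices with at most l columns in each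
   block (columns selected by an injective f, possibly reordered, which only
   changes the sign of the determinant) *)
Definition Tdet (p : Pring) : Prop :=
  exists f : 'I_k -> colT,
    injective f /\
    (forall i : 'I_m, (#|[pred a | tag (f a) == i]| <= l)%N) /\
    p = \det (\matrix_(w < k, a < k) Gentry w (f a)).

End Lemma19Defs.

Definition rdvd (R : comRingType) (a b : R) : Prop := exists c : R, b = a * c.

Definition is_lcm (R : comRingType) (S : R -> Prop) (p : R) : Prop :=
  (forall a, S a -> rdvd a p) /\
  (forall b, (forall a, S a -> rdvd a b) -> rdvd p b).

Definition tdeg (n : nat) (R : nzRingType) (p : {mpoly R[n]}) : nat := (msize p).-1.

(* Every determinant in T_{k,l}(G) is, up to sign, the minor of G on a k-set S of
   columns with at most l columns per block, so p divides the product of these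
   finitely many minors (and p = 0 if one of them vanishes).  Expanding a minor
   shows that its degree is at most the sum of the degrees of its columns: 0 for
   the k columns of I_k and at most 2 for the n - k others.  Since every column
   lies in at most binom(n-1, k-1) k-sets, summing over S gives
   deg p <= 2 (n - k) binom(n-1, k-1). *)

From HB Require Import structures.
From mathcomp Require Import all_boot all_algebra.
From mathcomp Require Import fingroup perm mpoly.

Set Implicit Arguments.
Unset Strict Implicit.
Unset Printing Implicit Defensive.

Import GRing.Theory.
Local Open Scope ring_scope.

Section TotalDegree.
Variables (n : nat) (R : idomainType).
Implicit Types p q : {mpoly R[n]}.

Lemma tdeg0 : tdeg (0 : {mpoly R[n]}) = 0%N.
Proof. by rewrite /tdeg msize0. Qed.

Lemma tdeg_natr (j : nat) : tdeg (j%:R : {mpoly R[n]}) = 0%N.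
Proof. by rewrite /tdeg -mpolyC_nat msizeC; case: (_ != 0). Qed.

Lemma tdegX i : tdeg ('X_i : {mpoly R[n]}) = 1%N.
Proof. by rewrite /tdeg msizeX mdeg1. Qed.

Lemma tdegN p : tdeg (- p) = tdeg p.
Proof. by rewrite /tdeg msizeN. Qed.

Lemma tdeg_signr (b : bool) p : tdeg ((-1) ^+ b * p) = tdeg p.
Proof. by case: b; rewrite ?mulN1r ?mul1r ?tdegN. Qed.

Lemma tdegM p q : p != 0 -> q != 0 -> tdeg (p * q) = (tdeg p + tdeg q)%N.
Proof.
move=> p_nz q_nz; rewrite /tdeg msizeM //.
by rewrite (mpolySpred _ p_nz) (mpolySpred _ q_nz) addSn addnS.
Qed.

Lemma tdegM_le p q : (tdeg (p * q) <= tdeg p + tdeg q)%N.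
Proof.
have [->|p_nz] := eqVneq p 0; first by rewrite mul0r tdeg0.
have [->|q_nz] := eqVneq q 0; first by rewrite mulr0 tdeg0.
by rewrite tdegM.
Qed.

Lemma tdeg_leE p b : (tdeg p <= b)%N = (msize p <= b.+1)%N.
Proof. by rewrite /tdeg; case: (msize p). Qed.

Lemma tdeg_sum_le (I : Type) (rI : seq I) (P : pred I) (G : I -> {mpoly R[n]}) b :
  (forall i, P i -> tdeg (G i) <= b)%N -> (tdeg (\sum_(i <- rI | P i) G i) <= b)%N.
Proof.
move=> G_le; elim/big_ind: _ => //; first by rewrite tdeg0.
move=> p q; rewrite !tdeg_leE => p_le q_le.
by apply: leq_trans (msizeD_le p q) _; rewrite geq_max p_le.
Qed.

Lemma tdeg_prod_le (I : Type) (rI : seq I) (P : pred I) (G : I -> {mpoly R[n]}) :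
  (tdeg (\prod_(i <- rI | P i) G i) <= \sum_(i <- rI | P i) tdeg (G i))%N.
Proof.
elim/big_rec2: _ => [|i d p _ IH]; first by rewrite /tdeg msize1.
by apply: leq_trans (tdegM_le _ _) _; rewrite leq_add2l.
Qed.

Lemma tdeg_det_le (k : nat) (A : 'M[{mpoly R[n]}]_k) (b : 'I_k -> nat) :
  (forall i j, tdeg (A i j) <= b j)%N -> (tdeg (\det A) <= \sum_j b j)%N.
Proof.
move=> A_le; apply: tdeg_sum_le => sg _; rewrite tdeg_signr.
apply: leq_trans (tdeg_prod_le _ _ _) _.
rewrite [leqRHS](reindex_inj (@perm_inj _ sg)) /=.
exact: leq_sum.
Qed.

Lemma tdeg_dvd_le p q : q != 0 -> rdvd p q -> (tdeg p <= tdeg q)%N.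
Proof.
move=> q_nz [c def_q]; move: q_nz; rewrite def_q mulf_eq0 negb_or => /andP[p_nz c_nz].
by rewrite tdegM // leq_addr.
Qed.

Lemma tdeg_lcm_le (I : finType) (A : {pred I}) (d : I -> {mpoly R[n]})
    (S : {mpoly R[n]} -> Prop) p :
  (forall i, i \in A -> S (d i)) ->
  (forall a, S a -> exists2 i, i \in A & rdvd a (d i)) ->
  is_lcm S p -> (tdeg p <= \sum_(i in A) tdeg (d i))%N.
Proof.
move=> S_d dvd_d [dvd_p p_min].
have [/exists_inP[i Ai /eqP d0]|d_nz] := boolP [exists i in A, d i == 0].
  by have [c ->] := dvd_p _ (S_d i Ai); rewrite d0 mul0r tdeg0.
have prod_nz : \prod_(i in A) d i != 0.
  apply/prodf_neq0 => i Ai; apply: contraNneq d_nz => d0.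
  by apply/exists_inP; exists i; rewrite ?d0.
apply: leq_trans (tdeg_prod_le _ _ _); apply: tdeg_dvd_le prod_nz _.
apply: p_min => a /dvd_d[i Ai [c def_d]].
by exists (c * \prod_(j in A | j != i) d j); rewrite (bigD1 i) //= def_d mulrA.
Qed.

End TotalDegree.

Section ColumnSubsets.
Variables (R : comNzRingType) (k : nat) (T : finType) (M : 'I_k -> T -> R).

Definition mxcols (f : 'I_k -> T) : 'M[R]_k := \matrix_(w, a) M w (f a).

Variable c0 : T.

(* [c0] is a junk default: for [#|S| = k] it is never reached. *)
Definition enum_col (S : {set T}) (a : 'I_k) : T := nth c0 (enum S) a.

Lemma enum_col_inj (S : {set T}) : #|S| = k -> injective (enum_col S).
Proof.
move=> card_S a b /eqP; rewrite nth_uniq ?enum_uniq -?cardE ?card_S //.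
by move/eqP/val_inj.
Qed.

Lemma enum_col_mem (S : {set T}) a : #|S| = k -> enum_col S a \in S.
Proof. by move=> card_S; rewrite -mem_enum mem_nth // -cardE card_S. Qed.

Lemma sum_enum_col (S : {set T}) (b : T -> nat) :
  #|S| = k -> (\sum_a b (enum_col S a) = \sum_(c in S) b c)%N.
Proof.
move=> card_S; rewrite -[RHS]big_enum (big_nth c0) /=.
by rewrite -cardE card_S big_mkord.
Qed.

Lemma det_mxcols_enum_col (f : 'I_k -> T) : injective f ->
  exists b : bool,
    \det (mxcols (enum_col (f @: 'I_k))) = (-1) ^+ b * \det (mxcols f).
Proof.
move=> f_inj; set S := f @: 'I_k.
have card_S : #|S| = k by rewrite card_imset // card_ord.
have f_mem a : f a \in enum S by rewrite mem_enum imset_f.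
have idx_lt a : (index (f a) (enum S) < k)%N by rewrite -card_S cardE index_mem.
pose idx a := Ordinal (idx_lt a).
have enum_col_idx a : enum_col S (idx a) = f a by rewrite /enum_col nth_index.
have idx_inj : injective idx.
  by move=> a b eq_ab; apply: f_inj; rewrite -!enum_col_idx eq_ab.
pose sg := perm idx_inj.
have -> : mxcols f = col_perm sg (mxcols (enum_col S)).
  by apply/matrixP => w a; rewrite !mxE permE enum_col_idx.
exists (sg^-1)%g.
by rewrite col_permE det_mulmx det_perm mulrCA -signr_addb addbb mulr1.
Qed.

End ColumnSubsets.

Section KSubsets.
Variables (T : finType) (k : nat).

Lemma card_ksubsets_mem (c : T) :
  (#|[set S : {set T} | #|S| == k & c \in S]| <= 'C(#|T|.-1, k.-1))%N.
Proof.
rewrite -(cardsC1 c) -cards_draws.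
set D := [set S : {set T} | _].
have del_inj : {in D &, injective (fun S : {set T} => S :\ c)}.
  move=> S1 S2; rewrite !inE => /andP[_ cS1] /andP[_ cS2] eq_S.
  by rewrite -(setD1K cS1) -(setD1K cS2) eq_S.
rewrite -(card_in_imset del_inj); apply: subset_leq_card.
apply/subsetP => _ /imsetP[S + ->]; rewrite !inE => /andP[/eqP card_S cS].
apply/andP; split; first by apply/subsetP => x; rewrite !inE => /andP[].
by move: card_S; rewrite (cardsD1 c S) cS => <-.
Qed.

Lemma sum_ksubsets_le (b : T -> nat) :
  (\sum_(S : {set T} | #|S| == k) \sum_(c in S) b c <=
     (\sum_c b c) * 'C(#|T|.-1, k.-1))%N.
Proof.
rewrite (exchange_big_dep xpredT) //= big_distrl /=.
apply: leq_sum => c _; rewrite sum_nat_const mulnC leq_mul2l.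
apply/orP; right; apply: leq_trans (card_ksubsets_mem c).
by apply/eq_leq/eq_card => S; rewrite inE.
Qed.

End KSubsets.

Section GeneratorMatrix.
Variables (F : finFieldType) (m s l k : nat) (r : 'I_m -> nat).
Local Notation col := (colT l r).

(* The columns of [G] that are columns of [I_k]. *)
Definition unit_col (c : col) : bool :=
  (tagged c < l)%N && (tag c * l + tagged c < k)%N.

Definition col_deg (c : col) : nat := if unit_col c then 0 else 2.

Lemma tdeg_Centry w g : (tdeg (@Centry F k s l m r w g) <= (k <= g))%N.
Proof.
rewrite /Centry; case: ltnP => _ /=; first by rewrite tdeg_natr.
by case: insubP => [z _ _|_]; rewrite ?tdeg0 // /xv /var tdegX.
Qed.

Lemma tdeg_Gentry (w : 'I_k) (c : col) : (tdeg (Gentry F s w c) <= col_deg c)%N.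
Proof.
rewrite /Gentry /col_deg /unit_col; case: ltnP => a_lt /=.
  by apply: leq_trans (tdeg_Centry w _) _; case: ltnP.
case: insubP => [j _ _|_]; rewrite ?tdeg0 //.
apply: tdeg_sum_le => t _; apply: leq_trans (tdegM_le _ _) _.
by rewrite /yv /var tdegX ltnS (leq_trans (tdeg_Centry _ _)) ?leq_b1.
Qed.

Lemma card_unit_col : (0 < l)%N -> (k <= m * l)%N -> (k <= #|unit_col|)%N.
Proof.
move=> l_gt0 k_le_ml.
have blk_lt (w : 'I_k) : (w %/ l < m)%N.
  by rewrite ltn_divLR // (leq_trans (ltn_ord w)).
have pos_lt (w : 'I_k) (i : 'I_m) : (w %% l < l + r i)%N.
  by rewrite (leq_trans (ltn_pmod _ l_gt0)) // leq_addr.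
pose e (w : 'I_k) : col :=
  Tagged (fun i : 'I_m => 'I_(l + r i)) (Ordinal (pos_lt w (Ordinal (blk_lt w)))).
have e_inj : injective e.
  move=> w1 w2 /(congr1 (fun c : col => tag c * l + tagged c)%N) /=.
  by rewrite -!divn_eq => /val_inj.
rewrite -{1}(card_ord k) -(card_imset _ e_inj); apply: subset_leq_card.
apply/subsetP => _ /imsetP[w _ ->].
by rewrite unfold_in /unit_col /= ltn_pmod // -divn_eq ltn_ord.
Qed.

Lemma sum_col_deg : (0 < l)%N -> (k <= m * l)%N ->
  (\sum_c col_deg c <= 2 * (#|{: col}| - k))%N.
Proof.
move=> l_gt0 k_le_ml.
rewrite (bigID unit_col) /= big1 => [|c]; last by rewrite /col_deg => ->.
rewrite add0n (eq_bigr (fun=> 2)) => [|c]; last by rewrite /col_deg => /negbTE ->.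
rewrite sum_nat_const mulnC leq_mul2l -(cardC unit_col) -addnBAC ?card_unit_col //.
by rewrite leq_addl.
Qed.

Definition block_bounded (S : {set col}) : bool :=
  [forall i : 'I_m, #|[set c in S | tag c == i]| <= l]%N.

Definition Tsets : {set {set col}} :=
  [set S : {set col} | #|S| == k & block_bounded S].

Variable c0 : col.

Definition Tminor (S : {set col}) : Pring F k s l r :=
  \det (mxcols (@Gentry F k s l m r) (enum_col c0 S)).

Lemma Tdet_Tminor (S : {set col}) : S \in Tsets -> Tdet (Tminor S).
Proof.
rewrite inE => /andP[/eqP card_S /forallP S_bdd].
exists (enum_col c0 S); split; first exact: enum_col_inj.
split=> // i; apply: leq_trans (S_bdd i).
rewrite -(card_imset _ (@enum_col_inj _ _ c0 _ card_S)); apply: subset_leq_card.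
by apply/subsetP => _ /imsetP[a a_i ->]; rewrite inE enum_col_mem.
Qed.

Lemma Tdet_dvd_Tminor q : Tdet q -> exists2 S, S \in Tsets & rdvd q (Tminor S).
Proof.
case=> f [f_inj [f_bdd ->]]; exists (f @: 'I_k).
  rewrite inE card_imset // card_ord eqxx /=; apply/forallP => i.
  apply: leq_trans (f_bdd i); rewrite -(card_imset _ f_inj); apply: subset_leq_card.
  apply/subsetP => c; rewrite inE => /andP[/imsetP[a _ ->] a_i].
  by rewrite imset_f.
have [b minor_f] := det_mxcols_enum_col (@Gentry F k s l m r) c0 f_inj.
by exists ((-1) ^+ b); rewrite /Tminor minor_f mulrC.
Qed.

Lemma sum_tdeg_Tminor_le : (0 < l)%N -> (k <= m * l)%N ->
  (\sum_(S in Tsets) tdeg (Tminor S) <=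
     2 * (#|{: col}| - k) * 'C(#|{: col}|.-1, k.-1))%N.
Proof.
move=> l_gt0 k_le_ml.
apply: (@leq_trans (\sum_(S in Tsets) \sum_(c in S) col_deg c)).
  apply: leq_sum => S; rewrite inE => /andP[/eqP card_S _].
  rewrite -(sum_enum_col c0 _ card_S); apply: tdeg_det_le => w a.
  by rewrite mxE tdeg_Gentry.
apply: (@leq_trans (\sum_(S : {set col} | #|S| == k) \sum_(c in S) col_deg c)).
  rewrite [leqLHS]big_mkcond [leqRHS]big_mkcond; apply: leq_sum => S _.
  by rewrite inE; case: (#|S| == k); case: block_bounded.
apply: leq_trans (sum_ksubsets_le k _) _.
by rewrite leq_mul2r sum_col_deg ?orbT.
Qed.

End GeneratorMatrix.

Theorem lemma19 (F : finFieldType) (m s l k : nat) (r : 'I_m -> nat) :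
  (2 <= m)%N -> (1 <= s)%N -> (1 <= l)%N -> (forall i, 1 <= r i)%N ->
  k = (m * l - s)%N -> (l <= k)%N ->
  forall p : Pring F k s l r,
    is_lcm (@Tdet F k s l m r) p ->
    (tdeg p <= 2 * (\sum_(i < m) (l + r i) - k) *
                 'C((\sum_(i < m) (l + r i)).-1, k.-1))%N.
Proof.
move=> m_ge2 _ l_gt0 _ def_k _ p lcm_p.
have k_le_ml : (k <= m * l)%N by rewrite def_k leq_subr.
have c0 : colT l r.
  pose i0 : 'I_m := Ordinal (ltnW m_ge2).
  exact: Tagged (fun i : 'I_m => 'I_(l + r i)) (Ordinal (ltn_addr (r i0) l_gt0)).
have card_col : #|{: colT l r}| = (\sum_(i < m) (l + r i))%N.
  rewrite card_tagged sumnE big_map big_enum /=.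
  by apply: eq_bigr => i _; rewrite card_ord.
rewrite -card_col.
apply: leq_trans (tdeg_lcm_le (Tdet_Tminor F s c0) (Tdet_dvd_Tminor c0) lcm_p) _.
exact: sum_tdeg_Tminor_le.
Qed.
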